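(* Assume the setting below, with each $U_i$ bounded, connected, of positive mass $P(U_i)>0$ and $U_i\neq\mathcal X$, with unique global minimisers of all quality functions, and with all clusterings of each $U_i$ having connected clusters. Then for every $\gamma\ge0$, $$\mathrm{InStab}_{\mathrm{Mapper}}(\{Q^i_{n_i}\}_{i=1}^t,n,P)\le2\Big(P(T_\gamma(f))+P\big(D_\partial(f^n,f)>\gamma\big)+P(n_i=0)\Big),$$ where $P(D_\partial(f^n,f)>\gamma)$ is the probability (over $X\sim P^n$) that the optimal empirical Mapper function satisfies $D_\partial(f^n,f)>\gamma$, and $P(n_i=0)$ is the probability that $n_i=0$ for some $i\in\{1,\dots,t\}$.
   Context: $(\mathcal X,D)$ is a metric space with Borel probability measure $P$, covered by $U_1,\dots,U_t$. For each $i$ fix a finite label set $L_i=\{c^i_1,\dots,c^i_s\}$ (pairwise disjoint). A clustering of $U_i$ is a map $U_i\to L_i$ up to label permutation; $\mathcal F^i$ is the set of these. A Mapper function with components $f_1,\dots,f_t$ is $f(x)=\{f_i(x):x\in U_i\}$. Boundaries: for $A\subseteq U_i$, $\partial A=\{x\in\overline{U_i}:D(x,A)=D(x,\mathcal X\setminus A)=0\}$ with $D(x,A)=\inf_{y\in A}D(x,y)$; $\partial(f_i)=\bigcup_j\partial(f_i^{-1}(c^i_j))\cup\partial U_i$ ($\partial U_i$ the boundary in $\mathcal X$); tubes $T_\gamma(f_i)=\{x\in U_i:D(x,\partial(f_i))\le\gamma\}$ for $\gamma>0$, $T_0(f_i)=\partial(f_i)$, $T_\gamma(f)=\bigcup_iT_\gamma(f_i)$.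 Write $g_i\triangleleft T_\gamma(f_i)$ if for all $x,y\in U_i\setminus T_\gamma(f_i)$, $f_i(x)=f_i(y)\iff g_i(x)=g_i(y)$, and $g\triangleleft T_\gamma(f)$ if this holds for all $i$; $D_\partial(f,g)=\inf\{\gamma>0:f\triangleleft T_\gamma(g),\ g\triangleleft T_\gamma(f)\}$ (clusterings that agree up to permutation off the boundaries are identified). Quality functions: $P_i=P(\cdot\cap U_i)/P(U_i)$. $Q^i:\mathcal F^i\times M_1(U_i)\to\mathbb R$ ($M_1(U_i)$ = Borel probability measures on $U_i$) has a unique global minimiser $f_i$ of $Q^i(\cdot,P_i)$; the optimal Mapper function $f$ has components $f_i$. For $m\ge1$, $Q^i_m$ assigns a real number to each clustering of an $m$-point sample $Y\in U_i^m$ (order-independent) and has a unique minimiser $C^i_m(Y)$; $C^i_0$ is constant. For $X=(X_1,\dots,X_n)\sim P^n$, $X^i$ is the subsample of points lying in $U_i$, $n_i$ its size, and the optimal empirical Mapper function $f^n$ has components $f^n_i=C^i_{n_i}(X^i)$, extended to all of $U_i$ by Voronoi cells (a point gets the label of the nearest sample point, ties broken by smallest index). Instability: for Mapper functions $f,g$ and points $Y_1,\dots,Y_m$, $D_M(f,g)=\min_\pi\frac1m\sum_{j=1}^m\mathbf 1[f(Y_j)\neq\pi g(Y_j)]$, where $\pi=(\pi^1,\dots,\pi^t)$ with $\pi^i$ a permutation of $L_i$ acting label-wise. $\mathrm{InStab}_{\mathrm{Mapper}}(\{Q^i_{n_i}\}_{i=1}^t,n,P)$ is the expectation, over independent $X',X''\sim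 P^n$, of $D_M$ evaluated on the $2n$ points of $(X',X'')$ between the (Voronoi-extended) optimal empirical Mapper functions of $X'$ and of $X''$; this is assumed to be a random variable. *)

From HB Require Import structures.
From mathcomp Require Import all_boot all_order all_algebra all_fingroup.
From mathcomp Require Import all_classical all_reals all_analysis.

Set Implicit Arguments.
Unset Strict Implicit.
Unset Printing Implicit Defensive.

Import Order.TTheory GRing.Theory Num.Theory.
Local Open Scope classical_set_scope.
Local Open Scope ring_scope.

Section Mapper.
Context {R : realType}.

Section Metric.
Context {X : Type} (D : X -> X -> R).

Definition metric_open (A : set X) : Prop :=
  forall x, A x -> exists2 e : R, 0 < e & forall y, D x y < e -> A y.

Definition is_metric : Prop :=
  [/\ forall x y, 0 <= D x y,
      forall x y, D x y = 0 <-> x = y,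
      forall x y, D x y = D y x &
      forall x y z, D x z <= D x y + D y z].

Definition metric_bounded (A : set X) : Prop :=
  exists x0 (r : R), forall y, A y -> D x0 y <= r.

Definition metric_connected (A : set X) : Prop :=
  forall B C : set X, metric_open B -> metric_open C ->
    A `<=` B `|` C -> A `&` B `&` C = set0 ->
    A `&` B !=set0 -> A `&` C !=set0 -> False.

(* D(x,A) = inf_{y in A} D(x,y)  (= +oo for A empty) *)
Definition dist (x : X) (A : set X) : \bar R :=
  ereal_inf [set (D x y)%:E | y in A].

(* boundary of A relative to the closure of V:
   { x in closure V | D(x,A) = D(x, X \ A) = 0 } *)
Definition bdry (V A : set X) : set X :=
  [set x | dist x V = 0%E /\ dist x A = 0%E /\ dist x (~` A) = 0%E].

End Metric.

Section Setting.
Context {d : measure_display} {X : measurableType d} (D : X -> X -> R)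
        (P : probability X R) (t s : nat) (U : 'I_t -> set X).

(* components of Mapper functions: g i : X -> 'I_s is the clustering of U i
   (only its values on U i matter); the label c of component i stands for
   the label c^i_c, so label sets of different components are disjoint. *)
Definition mapper_val (g : 'I_t -> X -> 'I_s) (x : X) : {set 'I_t * 'I_s} :=
  finset (fun p : 'I_t * 'I_s => (x \in U p.1) && (p.2 == g p.1 x)).

Definition comp_bdry (i : 'I_t) (g : X -> 'I_s) : set X :=
  (\bigcup_(c in [set: 'I_s]) bdry D (U i) (U i `&` (g @^-1` [set c])))
  `|` bdry D setT (U i).

Definition tube (i : 'I_t) (g : X -> 'I_s) (gamma : R) : set X :=
  if gamma == 0 then comp_bdry i g
  else [set x | U i x /\ (dist D x (comp_bdry i g) <= gamma%:E)%E].

Definition Tube (g : 'I_t -> X -> 'I_s) (gamma : R) : set X :=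
  \bigcup_(i in [set: 'I_t]) tube i (g i) gamma.

Definition lhd (i : 'I_t) (h k : X -> 'I_s) (gamma : R) : Prop :=
  forall x y, U i x -> ~ tube i k gamma x -> U i y -> ~ tube i k gamma y ->
    (k x = k y <-> h x = h y).

Definition Dbd (f g : 'I_t -> X -> 'I_s) : \bar R :=
  ereal_inf [set gamma%:E | gamma in
    [set gamma : R | 0 < gamma /\
       forall i, lhd i (f i) (g i) gamma /\ lhd i (g i) (f i) gamma]].

(* Voronoi extension of a clustering c of the sample Y (ties broken by
   smallest index); with an empty sample the constant label c0 is used *)
Definition voronoi (m : nat) (Y : 'I_m -> X) (c : 'I_m -> 'I_s) (c0 : 'I_s)
    (x : X) : 'I_s :=
  match [pick j : 'I_m | [forall k : 'I_m,
          (D x (Y j) < D x (Y k)) || ((D x (Y j) == D x (Y k)) && (j <= k)%N)]]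
  with Some j => c j | None => c0 end.

Definition subsample (n : nat) (Xs : n.-tuple X) (i : 'I_t) : seq X :=
  [seq x <- tval Xs | x \in U i].

Definition n_i (n : nat) (Xs : n.-tuple X) (i : 'I_t) : nat :=
  size (subsample Xs i).

Definition emp_mapper
    (C : forall (i : 'I_t) (m : nat), ('I_m -> X) -> 'I_m -> 'I_s)
    (c0 : 'I_t -> 'I_s) (n : nat) (Xs : n.-tuple X) : 'I_t -> X -> 'I_s :=
  fun i => let Y := fun j => tnth (in_tuple (subsample Xs i)) j in
           voronoi Y (C i _ Y) (c0 i).

Definition DM (f g : 'I_t -> X -> 'I_s) (Y : seq X) : R :=
  (\big[minn/size Y]_(pi : {ffun 'I_t -> {perm 'I_s}})
     count (fun y => mapper_val f y !=
                     mapper_val (fun i x => pi i (g i x)) y) Y)%:R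
  / (size Y)%:R.

(* expectation w.r.t. the product measure P^n on n-samples, as iterated
   integrals (Fubini/Tonelli) *)
Fixpoint iexp (n : nat) : (n.-tuple X -> \bar R) -> \bar R :=
  match n return (n.-tuple X -> \bar R) -> \bar R with
  | 0 => fun h => h [tuple]
  | m.+1 => fun h => (\int[P]_x iexp (fun tl : m.-tuple X => h (cons_tuple x tl)))%E
  end.

Definition probn (n : nat) (A : set (n.-tuple X)) : \bar R :=
  iexp (fun Xs => (\1_A Xs : R)%:E).

Definition InStab
    (C : forall (i : 'I_t) (m : nat), ('I_m -> X) -> 'I_m -> 'I_s)
    (c0 : 'I_t -> 'I_s) (n : nat) : \bar R :=
  iexp (fun X1 : n.-tuple X => iexp (fun X2 : n.-tuple X =>
    (DM (emp_mapper C c0 X1) (emp_mapper C c0 X2) (tval X1 ++ tval X2))%:E)).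

Definition Pcond (i : 'I_t) : set X -> \bar R :=
  fun A => (P (A `&` U i) / P (U i))%E.

End Setting.
End Mapper.

From HB Require Import structures.
From mathcomp Require Import all_boot all_order all_algebra all_fingroup.
From mathcomp Require Import all_classical all_reals all_analysis.
From mathcomp Require Import measurable_realfun lra.

Set Implicit Arguments.
Unset Strict Implicit.
Unset Printing Implicit Defensive.

Import Order.TTheory GRing.Theory Num.Theory.
Local Open Scope classical_set_scope.
Local Open Scope ring_scope.

(* Let B be the event D_partial(f^n, f) > gamma.  When neither sample lies in
   B, on each U_i and outside the tube T_gamma(f_i) both empirical clusterings
   induce the same partition as f_i, so there they differ only by a relabelling;
   with these relabellings the two empirical Mapper functions disagree only at
   sample points in T_gamma(f).  Pointwise, therefore,
     D_M <= 1_B(X') + 1_B(X'') + #{sample points in T_gamma(f)} / 2n,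
   and integrating gives InStab <= 2 P^n(B) + P(T_gamma(f)).  The iterated expectations integrate
   functions that need not be measurable, so only monotonicity and
   subadditivity against a measurable summand are used. *)

Section nonmeasurable_integral.
Import HBNNSimple.
Local Open Scope ereal_scope.
Context {R : realType} {d : measure_display} {T : measurableType d}
  (mu : {measure set T -> \bar R}).

Lemma ge0_le_integralT (F G : T -> \bar R) : (forall x, 0 <= F x) ->
  (forall x, F x <= G x) -> \int[mu]_x F x <= \int[mu]_x G x.
Proof.
move=> F0 FG; have G0 x : 0 <= G x by apply: le_trans (F0 x) (FG x).
rewrite !ge0_integralTE //; apply: ereal_sup_le => _ [h hF <-].
by exists h => //= x; apply: le_trans (hF x) (FG x).
Qed.

(* Only [G] needs to be measurable: a simple [h <= F + G] satisfies
   [h <= (h - G)^+ + G] with [(h - G)^+ <= F] measurable. *)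
Lemma ge0_integralD_le (F G : T -> \bar R) : (forall x, 0 <= F x) ->
  (forall x, 0 <= G x) -> measurable_fun setT G ->
  \int[mu]_x (F x + G x) <= \int[mu]_x F x + \int[mu]_x G x.
Proof.
move=> F0 G0 mG.
rewrite [leLHS]ge0_integralTE => [|x]; last exact: adde_ge0.
apply: ge_ereal_sup => _ [h hFG <-].
pose k x := maxe ((h x)%:E - G x) 0.
have mh : measurable_fun setT (fun x => (h x)%:E).
  by apply/measurable_EFinP; exact: measurable_funPT.
have mk : measurable_fun setT k.
  by apply: measurable_maxe => //; exact: emeasurable_funB.
have k0 x : 0 <= k x by rewrite /k le_max lexx orbT.
rewrite -integralT_nnsfun; apply: (@le_trans _ _ (\int[mu]_x (k x + G x))).
  apply: ge0_le_integral => //.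
  - by move=> x _; rewrite lee_fin.
  - exact: emeasurable_funD.
  - move=> x _; rewrite /k; move: (G0 x); case: (G x) => [r| |] //= r0.
      by rewrite -leeBlDr // le_max lexx.
    by rewrite addeNy maxNye add0e leey.
rewrite ge0_integralD //; apply: leeD2r.
apply: ge0_le_integralT => // x; rewrite /k ge_max F0 andbT.
move: (hFG x) (G0 x); case: (G x) => [r| |] //= hle r0.
  by rewrite EFinN leeBlDr.
by rewrite addeNy leNye.
Qed.

End nonmeasurable_integral.

Section iterated_expectation.
Local Open Scope ereal_scope.
Context {R : realType} {d : measure_display} {X : measurableType d}
  (P : probability X R).

Let PsetT : (P : measure X R) setT = 1 := probability_setT P.

Lemma iexp_ge0 n (h : n.-tuple X -> \bar R) : (forall Xs, 0 <= h Xs) ->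
  0 <= iexp P h.
Proof.
elim: n h => [|m IH] h h0 /=; first exact: h0.
by apply: integral_ge0 => x _; exact: IH.
Qed.

Lemma le_iexp n (h1 h2 : n.-tuple X -> \bar R) : (forall Xs, 0 <= h1 Xs) ->
  (forall Xs, h1 Xs <= h2 Xs) -> iexp P h1 <= iexp P h2.
Proof.
elim: n h1 h2 => [|m IH] h1 h2 h10 h12 /=; first exact: h12.
apply: ge0_le_integralT => x; first exact: iexp_ge0.
exact: IH.
Qed.

Lemma probn_ge0 n (A : set (n.-tuple X)) : 0 <= probn P A.
Proof. by apply: iexp_ge0 => Xs; rewrite lee_fin indicE. Qed.

Section sample_count.
Variables (T : set X) (mT : measurable T).

Lemma iexp_add_count n (F : n.-tuple X -> \bar R) (c : \bar R) (a : R) :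
  (forall Xs, 0 <= F Xs) -> 0 <= c -> (0 <= a)%R ->
  iexp P (fun Xs => F Xs + c + (a * (count (fun y => y \in T) Xs)%:R)%:E)
    <= iexp P F + c + (a * n%:R)%:E * P T.
Proof.
elim: n F c => [|m IH] F c F0 c0 a0 /=.
  by rewrite !mulr0 mul0e.
pose G x := c + (a * m%:R)%:E * P T + a%:E * (\1_T x)%:E.
have PT0 : 0 <= P T by exact: measure_ge0.
have G0 x : 0 <= G x.
  by rewrite !adde_ge0 ?mule_ge0 // lee_fin ?mulr_ge0 // indicE.
have mG : measurable_fun setT G.
  apply: emeasurable_funD => //; apply/measurable_EFinP.
  by apply: measurable_funM => //; exact: measurable_indic.
apply: (@le_trans _ _
    (\int[P]_x (iexp P (fun tl : m.-tuple X => F (cons_tuple x tl)) + G x))).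
  apply: ge0_le_integralT => x.
    apply: iexp_ge0 => tl; rewrite !adde_ge0 // lee_fin mulr_ge0 //.
  have cx0 : 0 <= c + (a * (x \in T)%:R)%:E.
    by rewrite adde_ge0 // lee_fin mulr_ge0.
  have -> : G x = c + (a * (x \in T)%:R)%:E + (a * m%:R)%:E * P T.
    by rewrite /G indicE -EFinM addeAC.
  under eq_fun do rewrite natrD mulrDr EFinD addeA -(addeA (F _)).
  by rewrite addeA; exact: IH.
have Fx0 x : 0 <= iexp P (fun tl : m.-tuple X => F (cons_tuple x tl)).
  by apply: iexp_ge0 => tl; exact: F0.
apply: le_trans (ge0_integralD_le P Fx0 G0 mG) _.
rewrite -[leRHS]addeA; apply: leeD2l; rewrite ge0_integralD //; first last.
- apply: emeasurable_funM => //.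
  by apply/measurable_EFinP; exact: measurable_indic.
- by move=> x _; rewrite mule_ge0 // lee_fin indicE.
- by move=> x _; rewrite adde_ge0 // mule_ge0 // lee_fin mulr_ge0.
rewrite integral_cst // PsetT mule1 ge0_integralZl_EFin //; last first.
  by apply/measurable_EFinP; exact: measurable_indic.
rewrite integral_indic // setIT -addeA -ge0_muleDl ?lee_fin ?mulr_ge0 //.
by rewrite -EFinD -natr1 mulrDr mulr1.
Qed.

Lemma iexp2_indic_count_le n (B : set (n.-tuple X))
    (h : n.-tuple X -> n.-tuple X -> \bar R) :
  (forall X1 X2, 0 <= h X1 X2) ->
  (forall X1 X2, h X1 X2 <= (\1_B X1 + \1_B X2 +
     (count (fun y => y \in T) (tval X1 ++ tval X2))%:R / (n + n)%:R)%:E) ->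
  iexp P (fun X1 => iexp P (h X1)) <= 2%:E * probn P B + P T.
Proof.
move=> h0 hB; set a : R := ((n + n)%:R)^-1%R.
have a0 : (0 <= a)%R by rewrite invr_ge0.
pose cnt (Xs : n.-tuple X) : R := (count (fun y => y \in T) Xs)%:R.
have cnt0 Xs : (0 <= a * cnt Xs)%R by rewrite mulr_ge0.
have B0 Xs : 0 <= (\1_B Xs : R)%:E by rewrite lee_fin indicE.
have PT0 : 0 <= P T by exact: measure_ge0.
have pB0 := probn_ge0 B.
apply: (@le_trans _ _ (iexp P (fun X1 => iexp P (fun X2 =>
    (\1_B X2 : R)%:E + (\1_B X1 + a * cnt X1)%:E + (a * cnt X2)%:E)))).
  apply: le_iexp => [X1|X1]; first exact: iexp_ge0.
  apply: le_iexp => // X2; apply: le_trans (hB X1 X2) _.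
  rewrite -!EFinD lee_fin count_cat natrD /cnt -/a; lra.
apply: (@le_trans _ _ (iexp P (fun X1 =>
    probn P B + (\1_B X1 + a * cnt X1)%:E + (a * n%:R)%:E * P T))).
  apply: le_iexp => X1.
    by apply: iexp_ge0 => X2; rewrite -!EFinD lee_fin !addr_ge0 // indicE.
  by apply: iexp_add_count; rewrite // lee_fin addr_ge0.
under eq_fun do rewrite EFinD addeCA -addeA addeAC addeA.
apply: le_trans (iexp_add_count B0 _ a0) _.
  by rewrite adde_ge0 // mule_ge0 // lee_fin mulr_ge0.
have an1 : (a * n%:R + a * n%:R <= 1)%R.
  rewrite -mulrDr -natrD /a.
  have [->|n0] := posnP n; first by rewrite invr0 mul0r.
  by rewrite mulVf // pnatr_eq0 addn_eq0 negb_and -lt0n n0.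
rewrite -/(probn P B) addeA -(addeA (probn P B + probn P B)).
rewrite -ge0_muleDl ?lee_fin ?mulr_ge0 // mule_natl mule2n.
by apply: leeD2l; apply: gee_pMl.
Qed.

End sample_count.

End iterated_expectation.

(* Off [A], send the k-th element of [~: A] to the k-th element of
   [~: phi @: A]; the two have the same size by injectivity. *)
Lemma inj_in_perm (T : finType) (A : {set T}) (phi : T -> T) :
  {in A &, injective phi} -> exists pi : {perm T}, {in A, pi =1 phi}.
Proof.
move=> phiI; set ea := enum (~: A); set eb := enum (~: phi @: A).
have sz : size ea = size eb.
  apply/eqP; rewrite -!cardE -(eqn_add2l #|A|) cardsC.
  by rewrite -{1}(card_in_imset phiI) cardsC.
pose h x := if x \in A then phi x else nth x eb (index x ea).
have ea_x x : x \notin A -> x \in ea by rewrite mem_enum inE.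
have nth_eb x : x \notin A -> nth x eb (index x ea) \in ~: phi @: A.
  by move=> xA; rewrite -mem_enum mem_nth // -sz index_mem ea_x.
have hI : injective h.
  move=> x y; rewrite /h.
  case: (boolP (x \in A)) => xA; case: (boolP (y \in A)) => yA.
  - exact: phiI.
  - by move=> e; have := nth_eb y yA; rewrite -e inE imset_f.
  - by move=> e; have := nth_eb x xA; rewrite e inE imset_f.
  - have iy : (index y ea < size eb)%N by rewrite -sz index_mem ea_x.
    rewrite (set_nth_default x y iy) => /eqP.
    rewrite nth_uniq ?enum_uniq // -?sz ?index_mem ?ea_x // => /eqP e.
    by rewrite -(nth_index x (ea_x x xA)) e nth_index // ea_x.
by exists (perm hI) => x xA; rewrite permE /h xA.
Qed.

Lemma same_partition_perm (T : Type) (s : nat) (W : set T) (g1 g2 : T -> 'I_s) :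
  (forall x y, W x -> W y -> (g2 x = g2 y <-> g1 x = g1 y)) ->
  exists pi : {perm 'I_s}, forall x, W x -> g1 x = pi (g2 x).
Proof.
move=> g12.
have /choice[phi phiP] : forall c : 'I_s, exists c' : 'I_s,
    forall x, W x -> g2 x = c -> g1 x = c'.
  move=> c; have [[x0 [Wx0 <-]]|nx] := pselect (exists x, W x /\ g2 x = c).
    by exists (g1 x0) => x Wx /(g12 x x0 Wx Wx0).
  by exists c => x Wx ex; exfalso; apply: nx; exists x.
pose A : {set 'I_s} := [set c | `[< exists x, W x /\ g2 x = c >]]%SET.
have phiI : {in A &, injective phi}.
  move=> c1 c2; rewrite !inE => -[x1 [W1 <-]] [x2 [W2 <-]] e.
  by apply/(g12 x1 x2 W1 W2); rewrite (phiP _ x1 W1 erefl) (phiP _ x2 W2 erefl).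
have [pi piP] := inj_in_perm phiI.
exists pi => x Wx; rewrite piP; first exact: phiP.
by rewrite inE; apply/asboolP; exists x.
Qed.

Section metric_open.
Local Open Scope ereal_scope.
Context {R : realType} {X : Type} (D : X -> X -> R) (HD : is_metric D).

Lemma dist_ge0 x A : 0 <= dist D x A.
Proof.
by case: HD => D0 _ _ _; apply/ereal_infP => _ [y _ <-]; rewrite lee_fin.
Qed.

Lemma dist_triangle x y A : dist D x A <= (D x y)%:E + dist D y A.
Proof.
case: HD => _ _ _ Dtri; rewrite addeC -leeBlDr //.
apply/ereal_infP => _ [z Az <-]; rewrite leeBlDr //.
apply: le_trans (ereal_inf_lbound _) _; first by exists z.
by rewrite -EFinD lee_fin addrC Dtri.
Qed.

Lemma metric_open_setI A B :
  metric_open D A -> metric_open D B -> metric_open D (A `&` B).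
Proof.
move=> oA oB x [/oA[e1 e10 H1] /oB[e2 e20 H2]].
exists (Num.min e1 e2); first by rewrite lt_min e10 e20.
by move=> y; rewrite lt_min => /andP[y1 y2]; split; [exact: H1|exact: H2].
Qed.

Lemma metric_open_setU A B :
  metric_open D A -> metric_open D B -> metric_open D (A `|` B).
Proof.
move=> oA oB x [/oA|/oB] [e e0 He]; exists e => // y /He; by [left|right].
Qed.

Lemma metric_open_bigcap (I : finType) (F : I -> set X) :
  (forall i, metric_open D (F i)) -> metric_open D (\bigcap_(i in [set: I]) F i).
Proof.
move=> oF x Fx; have /choice[e He] : forall i, exists e : R,
    (0 < e)%R /\ forall y, (D x y < e)%R -> F i y.
  by move=> i; have [e e0 He] := oF i x (Fx i Logic.I); exists e.
exists (\big[Num.min/1%R]_i e i).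
  by apply: lt_bigmin => // i _; exact: (He i).1.
by move=> y Dy i _; apply: (He i).2; apply: lt_le_trans Dy _; exact: bigmin_le.
Qed.

Lemma metric_open_dist_gt A (r : R) : metric_open D [set x | r%:E < dist D x A].
Proof.
move=> x /=; have := dist_triangle x ^~ A.
case: (dist D x A) => [v| |] // Hy rv.
  exists (v - r)%R; first by rewrite subr_gt0 -lte_fin.
  move=> y Dxy; move: (Hy y) (dist_ge0 y A).
  case: (dist D y A) => [w| |] //= h _; last by rewrite ltry.
  by rewrite lte_fin; rewrite -EFinD lee_fin in h; rewrite lte_fin in rv; lra.
exists 1%R => // y _; move: (Hy y) (dist_ge0 y A).
by case: (dist D y A) => [w| |] //= h _; rewrite leye_eq in h.
Qed.

Lemma dist_gt0 S x : metric_open D (~` S) -> ~ S x -> 0 < dist D x S.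
Proof.
move=> oS /oS[e e0 He]; apply: (@lt_le_trans _ _ e%:E); first by rewrite lte_fin.
apply/ereal_infP => _ [z Sz <-]; rewrite lee_fin leNgt.
by apply/negP => /He.
Qed.

Lemma metric_openC_bdry V A : metric_open D (~` bdry D V A).
Proof.
have -> : ~` bdry D V A = [set x | 0 < dist D x V] `|`
    [set x | 0 < dist D x A] `|` [set x | 0 < dist D x (~` A)].
  apply/seteqP; split => x /=; rewrite !lt0e !dist_ge0 !andbT.
    by move=> /not_andP[/eqP|/not_andP[]/eqP]; [left; left|left; right|right].
  by case=> [[]|] /eqP dx0 [? [? ?]].
by do 2?apply: metric_open_setU; exact: metric_open_dist_gt 0%R.
Qed.

End metric_open.

Section mapper.
Context {R : realType} {d : measure_display} {X : measurableType d}
  (D : X -> X -> R) (HD : is_metric D) {t s : nat} (U : 'I_t -> set X).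

Lemma metric_openC_comp_bdry i (g : X -> 'I_s) :
  metric_open D (~` comp_bdry D U i g).
Proof.
rewrite /comp_bdry setCU setC_bigcup; apply: metric_open_setI.
  by apply: metric_open_bigcap => c; exact: metric_openC_bdry.
exact: metric_openC_bdry.
Qed.

Lemma notin_tube_dist_gt i (g : X -> 'I_s) (gamma : R) x :
  0 <= gamma -> U i x -> ~ tube D U i g gamma x ->
  (gamma%:E < dist D x (comp_bdry D U i g))%E.
Proof.
move=> gamma0 Ux; rewrite /tube; case: eqP => [->|_] notin.
  by apply: dist_gt0 notin; exact: metric_openC_comp_bdry.
by rewrite ltNge; apply/negP => le_g; apply: notin.
Qed.

(* As [D_partial(g, f) <= gamma] is below the distances of [x] and [y] to the
   boundary of [f i], the infimum defining it provides an admissible [gamma']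
   that still keeps both points outside [T_gamma'(f i)]. *)
Lemma Dbd_le_partition (g f : 'I_t -> X -> 'I_s) (gamma : R) : 0 <= gamma ->
  ~ (gamma%:E < Dbd D U g f)%E -> forall i x y, U i x -> U i y ->
  ~ tube D U i (f i) gamma x -> ~ tube D U i (f i) gamma y ->
  (f i x = f i y <-> g i x = g i y).
Proof.
move=> gamma0 /negP; rewrite -leNgt => Dgf i x y Ux Uy tx ty.
have px := notin_tube_dist_gt gamma0 Ux tx.
have py := notin_tube_dist_gt gamma0 Uy ty.
have /ereal_inf_lt[_ [g' [g'0 g'lhd] <-]] : (Dbd D U g f <
    mine (dist D x (comp_bdry D U i (f i))) (dist D y (comp_bdry D U i (f i))))%E.
  by apply: le_lt_trans Dgf _; rewrite lt_min px py.
rewrite lt_min => /andP[gx gy].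
have notin z : (g'%:E < dist D z (comp_bdry D U i (f i)))%E ->
    ~ tube D U i (f i) g' z.
  rewrite /tube; case: eqP => [g'E|_ zg' [_ g'z]].
    by rewrite g'E ltxx in g'0.
  by move: (lt_le_trans zg' g'z); rewrite ltxx.
exact: (g'lhd i).1 x y Ux (notin _ gx) Uy (notin _ gy).
Qed.

Lemma DM_ge0 (g1 g2 : 'I_t -> X -> 'I_s) Y : 0 <= DM U g1 g2 Y :> R.
Proof. by rewrite /DM divr_ge0. Qed.

Lemma DM_le1 (g1 g2 : 'I_t -> X -> 'I_s) Y : DM U g1 g2 Y <= 1 :> R.
Proof.
rewrite /DM -minEnat; have [->|Y0] := eqVneq (size Y) 0%N.
  by rewrite invr0 mulr0.
rewrite ler_pdivrMr ?ltr0n ?lt0n // mul1r ler_nat bigmin_idl.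
by rewrite minEnat geq_minl.
Qed.

Lemma DM_le_count (g1 g2 : 'I_t -> X -> 'I_s) Y (T : set X)
    (pi : {ffun 'I_t -> {perm 'I_s}}) :
  (forall y, ~ T y -> forall i, U i y -> g1 i y = pi i (g2 i y)) ->
  DM U g1 g2 Y <= (count (fun y => y \in T) Y)%:R / (size Y)%:R :> R.
Proof.
move=> g12; rewrite /DM ler_wpM2r ?invr_ge0 // ler_nat -minEnat.
apply: leq_trans (bigmin_le (size Y) pi _) _; apply: sub_count => y /=.
apply: contraR => /negP; rewrite in_setE => yT.
apply/eqP/setP => -[i c]; rewrite !inE /=.
by case: (boolP (y \in U i)) => //= /set_mem Uy; rewrite (g12 y yT i Uy).
Qed.

Lemma Dbd_le_perm (g1 g2 f : 'I_t -> X -> 'I_s) (gamma : R) : 0 <= gamma ->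
  ~ (gamma%:E < Dbd D U g1 f)%E -> ~ (gamma%:E < Dbd D U g2 f)%E ->
  exists pi : {ffun 'I_t -> {perm 'I_s}}, forall y, ~ Tube D U f gamma y ->
    forall i, U i y -> g1 i y = pi i (g2 i y).
Proof.
move=> gamma0 Dg1 Dg2.
have /choice[pi piP] i : exists pi : {perm 'I_s}, forall x,
    U i x /\ ~ tube D U i (f i) gamma x -> g1 i x = pi (g2 i x).
  apply: same_partition_perm => x y [Ux tx] [Uy ty].
  have e1 := Dbd_le_partition gamma0 Dg1 Ux Uy tx ty.
  have e2 := Dbd_le_partition gamma0 Dg2 Ux Uy tx ty.
  by rewrite -e1 -e2.
exists [ffun i => pi i] => y notin i Uy; rewrite ffunE; apply: piP.
by split => // ?; apply: notin; exists i.
Qed.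

Lemma DM_le_Tube (g1 g2 f : 'I_t -> X -> 'I_s) (gamma : R) Y : 0 <= gamma ->
  ~ (gamma%:E < Dbd D U g1 f)%E -> ~ (gamma%:E < Dbd D U g2 f)%E ->
  DM U g1 g2 Y
    <= (count (fun y => y \in Tube D U f gamma) Y)%:R / (size Y)%:R :> R.
Proof.
by move=> gamma0 Dg1 Dg2; have [pi /DM_le_count] := Dbd_le_perm gamma0 Dg1 Dg2.
Qed.

Lemma DM_samples_le n (g : n.-tuple X -> 'I_t -> X -> 'I_s) f (gamma : R)
    (B : set (n.-tuple X)) (X1 X2 : n.-tuple X) : 0 <= gamma ->
  (forall Xs, ~ B Xs -> ~ (gamma%:E < Dbd D U (g Xs) f)%E) ->
  DM U (g X1) (g X2) (tval X1 ++ tval X2) <= \1_B X1 + \1_B X2 +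
    (count (fun y => y \in Tube D U f gamma) (tval X1 ++ tval X2))%:R
      / (n + n)%:R :> R.
Proof.
move=> gamma0 gB; have frac0 : 0 <= (count (fun y => y \in Tube D U f gamma)
    (tval X1 ++ tval X2))%:R / (n + n)%:R :> R by rewrite divr_ge0.
have B0 Xs : 0 <= \1_B Xs :> R by rewrite indicE.
have B1 Xs : B Xs -> \1_B Xs = 1 :> R by move=> BXs; rewrite indicE mem_set.
have [/B1 BX1|/gB DX1] := pselect (B X1).
  by apply: le_trans (DM_le1 _ _ _) _; have := B0 X2; lra.
have [/B1 BX2|/gB DX2] := pselect (B X2).
  by apply: le_trans (DM_le1 _ _ _) _; have := B0 X1; lra.
apply: le_trans (DM_le_Tube _ gamma0 DX1 DX2) _.
by rewrite size_cat !size_tuple lerDr addr_ge0.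
Qed.

Lemma measurable_Tube (Hborel : (@measurable d X) = <<s metric_open D >>)
  (HUmeas : forall i, measurable (U i)) (f : 'I_t -> X -> 'I_s) (gamma : R) :
  measurable (Tube D U f gamma).
Proof.
have mO A : metric_open D A -> measurable A.
  by move=> oA; rewrite Hborel; exact: sub_sigma_algebra.
have mC A : metric_open D (~` A) -> measurable A.
  by move=> oA; rewrite -[A]setCK; apply: measurableC; exact: mO.
apply: fin_bigcup_measurable; first exact: finite_finset.
move=> i _; rewrite /tube; case: eqP => _.
  exact/mC/metric_openC_comp_bdry.
have -> : [set x | U i x /\ (dist D x (comp_bdry D U i (f i)) <= gamma%:E)%E] =
    U i `&` ~` [set x | gamma%:E < dist D x (comp_bdry D U i (f i))]%E.
  by apply/seteqP; split => x /= [Ux]; rewrite leNgt => /negP.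
by apply: measurableI => //; apply: mC; rewrite setCK; exact: metric_open_dist_gt.
Qed.

End mapper.

Unset Implicit Arguments.

Theorem theorem7p1
  (R : realType) (d : measure_display) (X : measurableType d)
  (D : X -> X -> R) (HD : is_metric D)
  (Hborel : (@measurable d X) = <<s metric_open D >>)
  (P : probability X R)
  (t s : nat) (U : 'I_t -> set X)
  (Hcover : forall x : X, exists i, U i x)
  (HUmeas : forall i, measurable (U i))
  (HUbdd : forall i, metric_bounded D (U i))
  (HUconn : forall i, metric_connected D (U i))
  (HUpos : forall i, (0 < P (U i))%E)
  (HUneq : forall i, U i <> setT)
  (* population quality functions Q^i : clusterings x measures -> R *)
  (Q : 'I_t -> (X -> 'I_s) -> (set X -> \bar R) -> R)
  (HQinv : forall i (g h : X -> 'I_s) (sigma : {perm 'I_s}) mu,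
     (forall x, U i x -> h x = sigma (g x)) -> Q i h mu = Q i g mu)
  (* optimal Mapper function *)
  (f : 'I_t -> X -> 'I_s)
  (Hfmin : forall i (g : X -> 'I_s),
     Q i (f i) (Pcond P U i) <= Q i g (Pcond P U i) /\
     (Q i g (Pcond P U i) = Q i (f i) (Pcond P U i) ->
        exists sigma : {perm 'I_s}, forall x, U i x -> g x = sigma (f i x)))
  (* empirical quality functions Q^i_m and their minimisers C^i_m *)
  (Qm : forall (i : 'I_t) (m : nat), ('I_m -> X) -> ('I_m -> 'I_s) -> R)
  (HQm_order : forall i m (Y : 'I_m -> X) (c : 'I_m -> 'I_s) (rho : {perm 'I_m}),
     Qm i m (Y \o rho) (c \o rho) = Qm i m Y c)
  (HQm_label : forall i m (Y : 'I_m -> X) (c : 'I_m -> 'I_s) (sigma : {perm 'I_s}),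
     Qm i m Y (sigma \o c) = Qm i m Y c)
  (C : forall (i : 'I_t) (m : nat), ('I_m -> X) -> 'I_m -> 'I_s)
  (c0 : 'I_t -> 'I_s)
  (HCmin : forall i m (Y : 'I_m.+1 -> X), (forall j, U i (Y j)) ->
     forall c : 'I_m.+1 -> 'I_s,
       Qm i m.+1 Y (C i m.+1 Y) <= Qm i m.+1 Y c /\
       (Qm i m.+1 Y c = Qm i m.+1 Y (C i m.+1 Y) ->
          exists sigma : {perm 'I_s}, forall j, c j = sigma (C i m.+1 Y j)))
  (* all clusterings have connected clusters *)
  (Hfconn : forall i (c : 'I_s), metric_connected D (U i `&` (f i @^-1` [set c])))
  (HCconn : forall i m (Y : 'I_m -> X), (forall j, U i (Y j)) ->
     forall c : 'I_s,
       metric_connected D (U i `&` (voronoi D Y (C i m Y) (c0 i) @^-1` [set c])))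
  (n : nat) (gamma : R) (Hgamma : 0 <= gamma)
  (* InStab is a random variable; the events below are measurable *)
  (HDMmeas : measurable_fun [set: n.-tuple X * n.-tuple X]
     (fun p : n.-tuple X * n.-tuple X =>
        (DM U (emp_mapper D U C c0 p.1) (emp_mapper D U C c0 p.2)
            (tval p.1 ++ tval p.2) : R)))
  (HDbdmeas : measurable [set Xs : n.-tuple X |
                (gamma%:E < Dbd D U (emp_mapper D U C c0 Xs) f)%E])
  : (InStab D P U C c0 n <=
     2%:E * (P (Tube D U f gamma)
             + probn P [set Xs : n.-tuple X |
                 (gamma%:E < Dbd D U (emp_mapper D U C c0 Xs) f)%E]
             + probn P [set Xs : n.-tuple X | exists i, n_i U Xs i = 0%N]))%E.
Proof.
set T := Tube D U f gamma.
set B := [set Xs : n.-tuple X |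
  (gamma%:E < Dbd D U (emp_mapper D U C c0 Xs) f)%E].
have mT : measurable T by exact: measurable_Tube.
have InStab_le : (InStab D P U C c0 n <= 2%:E * probn P B + P T)%E.
  apply: (iexp2_indic_count_le P mT) => X1 X2; first by rewrite lee_fin DM_ge0.
  by rewrite lee_fin; apply: (DM_samples_le HD).
apply: le_trans InStab_le _.
have PT0 : (0 <= P T)%E by exact: measure_ge0.
rewrite ge0_muleDr ?adde_ge0 ?probn_ge0 // ge0_muleDr ?probn_ge0 //.
rewrite addeAC [leLHS]addeC; apply: leeD2r.
apply: le_trans (leeDl _ _); last by rewrite mule_ge0 ?probn_ge0.
by rewrite mule_natl mule2n leeDl.
Qed.
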